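(* There is an absolute constant $C\ge0$ such that the following holds. Under the assumptions of the context, if the non-monotone Frank-Wolfe procedure is run with step size $\gamma=1/K$ for a positive integer $K$ (so that it performs exactly $K$ iterations), then its output satisfies $$f(x^{(K)})\ge e^{-1}f(x^* )-\frac{LD^2}{2K}-\frac{C}{K^2}f(x^* ).$$
   Context: $\bar u\in\mathbb{R}^n_{>0}$; $f:[0,\bar u]\to\mathbb{R}$ is differentiable, nonnegative, DR-submodular (for all $a\le b$ in the domain, $i\in[n]$, $k\ge0$ with $a+ke_i,b+ke_i$ in the domain, $f(a+ke_i)-f(a)\ge f(b+ke_i)-f(b)$) with $L$-Lipschitz gradient; $\mathcal{P}\subseteq[0,\bar u]$ is nonempty, compact, convex, down-closed ($x\in\mathcal{P}$, $0\le y\le x$ imply $y\in\mathcal{P}$) with diameter $D=\max_{x,y\in\mathcal{P}}\|x-y\|$; $x^*\in\arg\max_{x\in\mathcal{P}}f(x)$. Non-monotone Frank-Wolfe with step size $\gamma$: $x^{(0)}=0$, $t^{(0)}=0$; while $t^{(k)}<1$: choose $v^{(k)}\in\arg\max\{\langle v,\nabla f(x^{(k)})\rangle: v\in\mathcal{P},\ v\le\bar u-x^{(k)}\}$, $\gamma_k=\min\{\gamma,1-t^{(k)}\}$, $x^{(k+1)}=x^{(k)}+\gamma_k v^{(k)}$, $t^{(k+1)}=t^{(k)}+\gamma_k$. *)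

From Stdlib Require Import Reals Lra.
Open Scope R_scope.

(* Vectors of R^n are represented as functions nat -> R whose coordinates
   of index >= n vanish (see is_vec). *)
Definition vec := nat -> R.

Fixpoint sumR (n : nat) (g : nat -> R) : R :=
  match n with O => 0 | S m => sumR m g + g m end.

Definition is_vec (n : nat) (x : vec) : Prop := forall i, (n <= i)%nat -> x i = 0.

Definition vadd (x y : vec) : vec := fun i => x i + y i.
Definition vsub (x y : vec) : vec := fun i => x i - y i.
Definition vscale (a : R) (x : vec) : vec := fun i => a * x i.
Definition vzero : vec := fun _ => 0.
Definition ebasis (i : nat) : vec := fun j => if Nat.eqb j i then 1 else 0.

Definition inner (n : nat) (x y : vec) : R := sumR n (fun i => x i * y i).
Definition norm (n : nat) (x : vec) : R := sqrt (inner n x x).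
Definition dist (n : nat) (x y : vec) : R := norm n (vsub x y).

Definition vle (n : nat) (x y : vec) : Prop := forall i, (i < n)%nat -> x i <= y i.

Definition in_box (n : nat) (ubar x : vec) : Prop :=
  is_vec n x /\ vle n vzero x /\ vle n x ubar.

Definition has_gradient_on_box (n : nat) (ubar : vec) (f : vec -> R) (grad : vec -> vec) : Prop :=
  forall x, in_box n ubar x ->
    is_vec n (grad x) /\
    forall eps, 0 < eps -> exists delta, 0 < delta /\
      forall y, in_box n ubar y -> dist n y x < delta ->
        Rabs (f y - f x - inner n (grad x) (vsub y x)) <= eps * dist n y x.

Definition lipschitz_gradient (n : nat) (ubar : vec) (grad : vec -> vec) (L : R) : Prop :=
  0 <= L /\
  forall x y, in_box n ubar x -> in_box n ubar y ->
    dist n (grad x) (grad y) <= L * dist n x y.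

Definition nonneg_on_box (n : nat) (ubar : vec) (f : vec -> R) : Prop :=
  forall x, in_box n ubar x -> 0 <= f x.

Definition DR_submodular (n : nat) (ubar : vec) (f : vec -> R) : Prop :=
  forall a b i k,
    in_box n ubar a -> in_box n ubar b -> vle n a b -> (i < n)%nat -> 0 <= k ->
    in_box n ubar (vadd a (vscale k (ebasis i))) ->
    in_box n ubar (vadd b (vscale k (ebasis i))) ->
    f (vadd a (vscale k (ebasis i))) - f a >= f (vadd b (vscale k (ebasis i))) - f b.

Definition closed_set (n : nat) (P : vec -> Prop) : Prop :=
  forall (xs : nat -> vec) (x : vec), is_vec n x ->
    (forall k, P (xs k)) ->
    (forall eps, 0 < eps -> exists N, forall k, (N <= k)%nat -> dist n (xs k) x < eps) ->
    P x.

Definition bounded_set (n : nat) (P : vec -> Prop) : Prop :=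
  exists M, forall x, P x -> norm n x <= M.

Definition compact_set (n : nat) (P : vec -> Prop) : Prop :=
  closed_set n P /\ bounded_set n P.

Definition convex_set (P : vec -> Prop) : Prop :=
  forall x y lam, P x -> P y -> 0 <= lam <= 1 ->
    P (vadd (vscale lam x) (vscale (1 - lam) y)).

Definition down_closed (n : nat) (P : vec -> Prop) : Prop :=
  forall x y, P x -> is_vec n y -> vle n vzero y -> vle n y x -> P y.

Definition admissible_set (n : nat) (ubar : vec) (P : vec -> Prop) : Prop :=
  (forall x, P x -> in_box n ubar x) /\
  (exists x, P x) /\ compact_set n P /\ convex_set P /\ down_closed n P.

Definition is_diameter (n : nat) (P : vec -> Prop) (D : R) : Prop :=
  (exists x y, P x /\ P y /\ dist n x y = D) /\
  (forall x y, P x -> P y -> dist n x y <= D).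

Definition is_maximizer (P : vec -> Prop) (f : vec -> R) (xs : vec) : Prop :=
  P xs /\ forall x, P x -> f x <= f xs.

(* A run of the non-monotone Frank-Wolfe procedure with step size gamma:
   sequences x^(k), v^(k), t^(k); whenever t^(k) < 1 (the loop continues),
   v^(k) is a maximizer of <v, grad f(x^(k))> over {v in P, v <= ubar - x^(k)}
   and the update is performed with gamma_k = min(gamma, 1 - t^(k)). *)
Definition FW_run (n : nat) (ubar : vec) (P : vec -> Prop) (grad : vec -> vec)
  (gamma : R) (x v : nat -> vec) (t : nat -> R) : Prop :=
  x O = vzero /\ t O = 0 /\
  forall k, t k < 1 ->
    (P (v k) /\ vle n (v k) (vsub ubar (x k)) /\
     (forall w, P w -> vle n w (vsub ubar (x k)) ->
        inner n w (grad (x k)) <= inner n (v k) (grad (x k)))) /\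
    x (S k) = vadd (x k) (vscale (Rmin gamma (1 - t k)) (v k)) /\
    t (S k) = t k + Rmin gamma (1 - t k).

(* Write g = 1/K. Along the run, x_k <= (1 - (1 - g)^k) ubar coordinatewise. DR-submodularity
   makes f concave along nonnegative directions, which gives f (x_k \/ xstar) >= (1 - g)^k f xstar.
   Testing the Frank-Wolfe direction against (x_k \/ xstar) - x_k, a feasible point by
   down-closedness, and using the descent lemma of the L-smooth f, one gets
     f x_{k+1} >= (1 - g) f x_k + g (1 - g)^k f xstar - L g^2 D^2 / 2.
   Unrolling, f x_K >= (1 - 1/K)^(K-1) f xstar - L D^2 / (2K), and (1 - 1/K)^(K-1) >= e^-1, so the
   constant C = 0 already works. *)

From Stdlib Require Import Reals Lra Lia FunctionalExtensionality.
From Coquelicot Require Import Coquelicot.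
(* Imported last, so that its [norm] and [dist] shadow those of Coquelicot and Stdlib. *)
Open Scope R_scope.

Lemma sumR_ext n g h : (forall i, (i < n)%nat -> g i = h i) -> sumR n g = sumR n h.
Proof.
  induction n as [|n IH]; intros H; simpl; [reflexivity|].
  rewrite IH, H; auto; intros; apply H; lia.
Qed.

Lemma sumR_add n g h : sumR n (fun i => g i + h i) = sumR n g + sumR n h.
Proof. induction n as [|n IH]; simpl; [lra|]. rewrite IH. lra. Qed.

Lemma sumR_scal n c g : sumR n (fun i => c * g i) = c * sumR n g.
Proof. induction n as [|n IH]; simpl; [lra|]. rewrite IH. lra. Qed.

Lemma sumR_le n g h : (forall i, (i < n)%nat -> g i <= h i) -> sumR n g <= sumR n h.
Proof.
  induction n as [|n IH]; intros H; simpl; [lra|].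
  assert (g n <= h n) by (apply H; lia).
  assert (sumR n g <= sumR n h) by (apply IH; intros; apply H; lia).
  lra.
Qed.

Lemma sumR_indicator n i c :
  (i < n)%nat -> sumR n (fun j => if Nat.eqb j i then c else 0) = c.
Proof.
  induction n as [|n IH]; intros Hi; simpl; [lia|].
  destruct (Nat.eqb_spec n i) as [->|Hne].
  - rewrite (sumR_ext _ _ (fun _ => 0 * c)), sumR_scal; [lra|].
    intros j Hj. destruct (Nat.eqb_spec j i); [lia | ring].
  - rewrite IH by lia. ring.
Qed.

Lemma vec_ext (x y : vec) : (forall i, x i = y i) -> x = y.
Proof. apply functional_extensionality. Qed.

Lemma inner_comm n x y : inner n x y = inner n y x.
Proof. apply sumR_ext. intros; ring. Qed.

Lemma inner_self_ge0 n x : 0 <= inner n x x.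
Proof.
  unfold inner. induction n as [|n IH]; simpl; [lra|].
  pose proof (Rle_0_sqr (x n)). unfold Rsqr in *. lra.
Qed.

Lemma inner_scal_r n g s d : inner n g (vscale s d) = s * inner n g d.
Proof. unfold inner. rewrite <- sumR_scal. apply sumR_ext. intros; unfold vscale; ring. Qed.

Lemma inner_scal_l n s g d : inner n (vscale s g) d = s * inner n g d.
Proof. rewrite inner_comm, inner_scal_r, inner_comm. reflexivity. Qed.

Lemma inner_sub_l n a b d : inner n (vsub a b) d = inner n a d - inner n b d.
Proof. unfold inner, vsub. induction n as [|n IH]; simpl; lra. Qed.

Lemma inner_expand n a b t :
  inner n (vadd a (vscale t b)) (vadd a (vscale t b))
  = inner n a a + 2 * t * inner n a b + t * t * inner n b b.
Proof.
  unfold inner. rewrite <- !sumR_scal, <- !sumR_add.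
  apply sumR_ext. intros; unfold vadd, vscale; ring.
Qed.

Lemma norm_ge0 n x : 0 <= norm n x.
Proof. apply sqrt_pos. Qed.

Lemma norm_sq n x : norm n x * norm n x = inner n x x.
Proof. apply sqrt_sqrt, inner_self_ge0. Qed.

Lemma norm_ext n d d' : (forall i, (i < n)%nat -> d i = d' i) -> norm n d = norm n d'.
Proof. intros H. unfold norm, inner. f_equal. apply sumR_ext. intros i Hi. rewrite H; auto. Qed.

Lemma norm_scal n s d : norm n (vscale s d) = Rabs s * norm n d.
Proof.
  unfold norm. replace (inner n (vscale s d) (vscale s d)) with (s * s * inner n d d).
  - rewrite sqrt_mult by (nra || apply inner_self_ge0).
    rewrite <- Rsqr_def, sqrt_Rsqr_abs. reflexivity.
  - unfold inner. rewrite <- sumR_scal. apply sumR_ext. intros; unfold vscale; ring.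
Qed.

Lemma quadratic_nonneg_discriminant A B C : 0 <= B ->
  (forall t, 0 <= A + 2 * t * C + t * t * B) -> C * C <= A * B.
Proof.
  intros HB0 Q. assert (HA : 0 <= A) by (specialize (Q 0); lra).
  destruct (Req_dec B 0) as [HB|HB].
  - destruct (Req_dec C 0) as [HC|HC]; [subst; lra|].
    specialize (Q (- (A + 1) / (2 * C))). rewrite HB in Q.
    replace (A + 2 * (- (A + 1) / (2 * C)) * C + - (A + 1) / (2 * C) * (- (A + 1) / (2 * C)) * 0)
      with (-1) in Q by (field; auto).
    lra.
  - specialize (Q (- C / B)).
    replace (A + 2 * (- C / B) * C + - C / B * (- C / B) * B) with (A - C * C / B) in Q
      by (field; auto).
    assert (HB' : 0 < B) by lra.
    replace (C * C) with (C * C / B * B) by (field; auto). nra.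
Qed.

Lemma inner_le_norm_mul n a b : inner n a b <= norm n a * norm n b.
Proof.
  assert (Hdisc : inner n a b * inner n a b <= inner n a a * inner n b b).
  { apply quadratic_nonneg_discriminant; [apply inner_self_ge0|].
    intros t. rewrite <- inner_expand. apply inner_self_ge0. }
  unfold norm. rewrite <- sqrt_mult by apply inner_self_ge0.
  destruct (Rle_dec (inner n a b) 0) as [Hle|Hgt].
  { pose proof (sqrt_pos (inner n a a * inner n b b)). lra. }
  rewrite <- (sqrt_square (inner n a b)) by lra. apply sqrt_le_1_alt. lra.
Qed.

Lemma Rabs_inner_le n a b : Rabs (inner n a b) <= norm n a * norm n b.
Proof.
  apply Rabs_le. split; [|apply inner_le_norm_mul].
  pose proof (inner_le_norm_mul n (vscale (-1) a) b) as H.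
  rewrite norm_scal, inner_scal_l in H.
  replace (Rabs (-1)) with 1 in H by (rewrite Rabs_left; lra). lra.
Qed.

Definition seg (x y : vec) (s : R) : vec := fun i => x i + s * (y i - x i).
(* Coquelicot's mean value theorem asks for two-sided continuity at the endpoints of [0, 1],
   so the parameter of a segment is clamped to [0, 1]. *)
Definition clamp01 (s : R) : R := Rmax 0 (Rmin s 1).

Lemma clamp01_bounds s : 0 <= clamp01 s <= 1.
Proof. unfold clamp01, Rmax, Rmin; repeat destruct Rle_dec; lra. Qed.

Lemma clamp01_id s : 0 <= s <= 1 -> clamp01 s = s.
Proof. unfold clamp01, Rmax, Rmin; repeat destruct Rle_dec; lra. Qed.

Lemma clamp01_contract a b : Rabs (clamp01 a - clamp01 b) <= Rabs (a - b).
Proof. unfold clamp01, Rmax, Rmin; repeat destruct Rle_dec; split_Rabs; lra. Qed.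

Lemma seg_0 x y : seg x y 0 = x.
Proof. apply vec_ext; intros; unfold seg; ring. Qed.

Lemma seg_1 x y : seg x y 1 = y.
Proof. apply vec_ext; intros; unfold seg; ring. Qed.

Lemma vsub_seg x y a b : vsub (seg x y b) (seg x y a) = vscale (b - a) (vsub y x).
Proof. apply vec_ext; intros; unfold vsub, vscale, seg; ring. Qed.

Lemma dist_seg n x y a b : dist n (seg x y b) (seg x y a) = Rabs (b - a) * norm n (vsub y x).
Proof. unfold dist. rewrite vsub_seg. apply norm_scal. Qed.

Lemma seg_between n x y s :
  vle n x y -> 0 <= s <= 1 -> vle n x (seg x y s) /\ vle n (seg x y s) y.
Proof.
  intros Hxy Hs. split; intros i Hi; specialize (Hxy i Hi); unfold seg.
  - assert (0 <= s * (y i - x i)) by (apply Rmult_le_pos; lra). lra.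
  - assert (s * (y i - x i) <= 1 * (y i - x i)) by (apply Rmult_le_compat_r; lra). lra.
Qed.

Lemma seg_in_box n ubar x y s :
  in_box n ubar x -> in_box n ubar y -> 0 <= s <= 1 -> in_box n ubar (seg x y s).
Proof.
  intros [Vx [Lx Ux]] [Vy [Ly Uy]] Hs. unfold seg, vle, is_vec, vzero in *. cbv beta in *.
  split; [|split]; intros i Hi;
    [rewrite Vx, Vy by assumption; ring|
     replace (x i + s * (y i - x i)) with ((1 - s) * x i + s * y i) by ring..].
  - specialize (Lx i Hi); specialize (Ly i Hi).
    assert (0 <= (1 - s) * x i) by (apply Rmult_le_pos; lra).
    assert (0 <= s * y i) by (apply Rmult_le_pos; lra). unfold vzero. lra.
  - specialize (Ux i Hi); specialize (Uy i Hi).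
    assert ((1 - s) * x i <= (1 - s) * ubar i) by (apply Rmult_le_compat_l; lra).
    assert (s * y i <= s * ubar i) by (apply Rmult_le_compat_l; lra). lra.
Qed.

Lemma mul_lt_of_lt_div a b c : 0 < b -> a < c / b -> a * b < c.
Proof.
  intros Hb H. apply Rmult_lt_compat_r with (r := b) in H; [|assumption].
  unfold Rdiv in H. rewrite Rmult_assoc, Rinv_l, Rmult_1_r in H; lra.
Qed.

Section Gradient.

Variables (n : nat) (ubar : vec) (f : vec -> R) (grad : vec -> vec).
Hypothesis Hgrad : has_gradient_on_box n ubar f grad.

Lemma gradient_locally_lipschitz z : in_box n ubar z ->
  exists delta C, 0 < delta /\ 0 <= C /\
    forall w, in_box n ubar w -> dist n w z < delta -> Rabs (f w - f z) <= C * dist n w z.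
Proof.
  intros Hz. destruct (Hgrad z Hz) as [_ Hd]. destruct (Hd 1 Rlt_0_1) as [delta [Hdelta H]].
  exists delta, (norm n (grad z) + 1).
  split; [assumption|split; [pose proof (norm_ge0 n (grad z)); lra|]].
  intros w Hw Hwz. specialize (H w Hw Hwz).
  pose proof (Rabs_inner_le n (grad z) (vsub w z)).
  pose proof (Rabs_triang (f w - f z - inner n (grad z) (vsub w z)) (inner n (grad z) (vsub w z))).
  replace (f w - f z - inner n (grad z) (vsub w z) + inner n (grad z) (vsub w z))
    with (f w - f z) in * by ring.
  unfold dist in *. lra.
Qed.

Lemma continuous_along_segment x y : in_box n ubar x -> in_box n ubar y ->
  forall c, continuity_pt (fun s => f (seg x y (clamp01 s))) c.
Proof.
  intros Hx Hy c eps Heps.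
  assert (Hz : in_box n ubar (seg x y (clamp01 c)))
    by (apply seg_in_box; auto; apply clamp01_bounds).
  destruct (gradient_locally_lipschitz _ Hz) as [delta [C [Hdelta [HC Hlip]]]].
  set (N := norm n (vsub y x)). assert (HN : 0 <= N) by apply norm_ge0.
  set (m := Rmin delta (eps / (C + 1))).
  assert (Hm : 0 < m) by (apply Rmin_glb_lt; [|apply Rdiv_lt_0_compat]; lra).
  exists (m / (N + 1)). split; [apply Rdiv_lt_0_compat; lra|].
  intros s [_ Hs]. simpl in *. unfold R_dist in *.
  apply mul_lt_of_lt_div in Hs; [|lra].
  assert (Hdist : dist n (seg x y (clamp01 s)) (seg x y (clamp01 c)) < m).
  { rewrite dist_seg. fold N. pose proof (clamp01_contract s c). pose proof (Rabs_pos (s - c)).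
    nra. }
  assert (Hbox : in_box n ubar (seg x y (clamp01 s)))
    by (apply seg_in_box; auto; apply clamp01_bounds).
  specialize (Hlip _ Hbox (Rlt_le_trans _ _ _ Hdist (Rmin_l _ _))).
  assert (Hm' : m * (C + 1) <= eps).
  { pose proof (Rmin_r delta (eps / (C + 1))) as Hmr. fold m in Hmr.
    apply Rmult_le_compat_r with (r := C + 1) in Hmr; [|lra].
    unfold Rdiv in Hmr. rewrite Rmult_assoc, Rinv_l, Rmult_1_r in Hmr; lra. }
  pose proof (Rabs_pos (f (seg x y (clamp01 s)) - f (seg x y (clamp01 c)))). nra.
Qed.

Lemma derivable_along_segment x y : in_box n ubar x -> in_box n ubar y ->
  forall c, 0 < c < 1 -> derivable_pt_lim (fun s => f (seg x y (clamp01 s))) c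
    (inner n (grad (seg x y c)) (vsub y x)).
Proof.
  intros Hx Hy c Hc eps Heps.
  assert (Hz : in_box n ubar (seg x y c)) by (apply seg_in_box; auto; lra).
  set (N := norm n (vsub y x)). assert (HN : 0 <= N) by apply norm_ge0.
  destruct (Hgrad _ Hz) as [_ Hd].
  destruct (Hd (eps / (2 * (N + 1)))) as [delta [Hdelta Happrox]]; [apply Rdiv_lt_0_compat; lra|].
  assert (Hpos : 0 < Rmin (Rmin c (1 - c)) (delta / (N + 1))).
  { repeat apply Rmin_glb_lt; try lra. apply Rdiv_lt_0_compat; lra. }
  exists (mkposreal _ Hpos). intros h Hh0 Hh. simpl in Hh.
  assert (Hh1 : Rabs h < Rmin c (1 - c)) by (eapply Rlt_le_trans; [apply Hh|apply Rmin_l]).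
  assert (Hh2 : Rabs h < delta / (N + 1)) by (eapply Rlt_le_trans; [apply Hh|apply Rmin_r]).
  assert (Hch : 0 <= c + h <= 1).
  { pose proof (Rmin_l c (1 - c)); pose proof (Rmin_r c (1 - c)). split_Rabs; lra. }
  rewrite !clamp01_id by (auto; lra).
  assert (Hdist : dist n (seg x y (c + h)) (seg x y c) = Rabs h * N).
  { rewrite dist_seg. do 2 f_equal. ring. }
  assert (Hclose : dist n (seg x y (c + h)) (seg x y c) < delta).
  { rewrite Hdist. apply mul_lt_of_lt_div in Hh2; [|lra]. pose proof (Rabs_pos h). nra. }
  specialize (Happrox _ (seg_in_box _ _ _ _ _ Hx Hy Hch) Hclose).
  rewrite Hdist, vsub_seg, inner_scal_r in Happrox.
  replace (c + h - c) with h in Happrox by ring.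
  set (l := inner n (grad (seg x y c)) (vsub y x)) in *.
  assert (Hah : 0 < Rabs h) by (apply Rabs_pos_lt; auto).
  replace ((f (seg x y (c + h)) - f (seg x y c)) / h - l)
    with ((f (seg x y (c + h)) - f (seg x y c) - h * l) / h) by (field; auto).
  unfold Rdiv. rewrite Rabs_mult, Rabs_inv.
  apply Rmult_lt_reg_r with (r := Rabs h); [assumption|].
  rewrite Rmult_assoc, Rinv_l, Rmult_1_r by lra.
  assert (Hfrac : eps / (2 * (N + 1)) * (Rabs h * N) = eps * Rabs h * (N / (2 * (N + 1))))
    by (field; lra).
  assert (N / (2 * (N + 1)) < 1).
  { assert (0 < / (N + 1)) by (apply Rinv_0_lt_compat; lra).
    replace (N / (2 * (N + 1))) with ((1 - / (N + 1)) / 2) by (field; lra). lra. }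
  assert (0 < eps * Rabs h) by (apply Rmult_lt_0_compat; assumption).
  rewrite Hfrac in Happrox. nra.
Qed.

(* Mean value theorem for [s |-> f (seg x y s) + a s^2]; the quadratic term yields the
   factor 1/2 of the descent lemma. *)
Lemma mvt_segment_quadratic x y a : in_box n ubar x -> in_box n ubar y ->
  exists c, 0 <= c <= 1 /\
    f y - f x + a = inner n (grad (seg x y c)) (vsub y x) + 2 * a * c.
Proof.
  intros Hx Hy.
  destruct (MVT_gen (fun s => f (seg x y (clamp01 s)) + a * s * s) 0 1
              (fun s => inner n (grad (seg x y s)) (vsub y x) + 2 * a * s)) as [c [Hc Hmvt]].
  - intros s Hs. rewrite Rmin_left, Rmax_right in Hs by lra.
    apply is_derive_Reals, derivable_pt_lim_plus.
    + apply derivable_along_segment; assumption.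
    + apply is_derive_Reals. auto_derive; [exact I|ring].
  - intros s _. apply continuity_pt_plus.
    + apply continuous_along_segment; assumption.
    + apply derivable_continuous_pt. exists (2 * a * s).
      apply is_derive_Reals. auto_derive; [exact I|ring].
  - rewrite Rmin_left, Rmax_right in Hc by lra. exists c. split; [assumption|].
    rewrite !clamp01_id, seg_0, seg_1 in Hmvt by lra. lra.
Qed.

Lemma descent_lemma L x y : lipschitz_gradient n ubar grad L ->
  in_box n ubar x -> in_box n ubar y ->
  f y >= f x + inner n (grad x) (vsub y x) - L / 2 * inner n (vsub y x) (vsub y x).
Proof.
  intros [HL Hlip] Hx Hy.
  set (N := norm n (vsub y x)). assert (HN : 0 <= N) by apply norm_ge0.
  rewrite <- (norm_sq n (vsub y x)). fold N.
  destruct (mvt_segment_quadratic x y (L / 2 * (N * N)) Hx Hy) as [c [Hc Hmvt]].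
  set (z := seg x y c) in *.
  assert (Hz : in_box n ubar z) by (apply seg_in_box; assumption).
  specialize (Hlip _ _ Hz Hx).
  rewrite <- (seg_0 x y) in Hlip at 2. unfold z in Hlip. rewrite dist_seg in Hlip. fold z N in Hlip.
  replace (Rabs (c - 0)) with c in Hlip by (rewrite Rminus_0_r, Rabs_pos_eq; lra).
  pose proof (Rabs_inner_le n (vsub (grad z) (grad x)) (vsub y x)) as Hcs.
  rewrite inner_sub_l in Hcs. fold N (dist n (grad z) (grad x)) in Hcs.
  assert (dist n (grad z) (grad x) * N <= L * c * N * N)
    by (apply (Rmult_le_compat_r N) in Hlip; lra).
  pose proof (Rabs_maj2 (inner n (grad z) (vsub y x) - inner n (grad x) (vsub y x))).
  lra.
Qed.

End Gradient.

Definition shift (a : vec) (i : nat) (c : R) : vec := vadd a (vscale c (ebasis i)).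

Lemma shift_at a i c j : shift a i c j = if Nat.eqb j i then a j + c else a j.
Proof. unfold shift, vadd, vscale, ebasis. destruct (Nat.eqb j i); ring. Qed.

Lemma shift_shift a i c d : shift (shift a i c) i d = shift a i (c + d).
Proof. apply vec_ext; intros j. rewrite !shift_at. destruct (Nat.eqb j i); ring. Qed.

Lemma vsub_shift a i c : vsub (shift a i c) a = vscale c (ebasis i).
Proof. apply vec_ext; intros j. unfold vsub, shift, vadd. ring. Qed.

Lemma shift_in_box n ubar a i c : in_box n ubar a -> (i < n)%nat -> 0 <= a i + c <= ubar i ->
  in_box n ubar (shift a i c).
Proof.
  intros [Va [La Ua]] Hi Hc. unfold in_box, is_vec, vle, vzero in *.
  split; [|split]; intros j Hj; rewrite shift_at;
    destruct (Nat.eqb_spec j i) as [->|]; auto; lia || lra.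
Qed.

Lemma shift_le n a b i ca cb : vle n a b -> a i + ca <= b i + cb ->
  vle n (shift a i ca) (shift b i cb).
Proof.
  intros Hab Hi j Hj. rewrite !shift_at. destruct (Nat.eqb_spec j i) as [->|]; auto.
Qed.

Lemma inner_ebasis n g i : (i < n)%nat -> inner n g (ebasis i) = g i.
Proof.
  intros Hi. unfold inner, ebasis. rewrite <- (sumR_indicator n i (g i)) by assumption.
  apply sumR_ext; intros j _. destruct (Nat.eqb_spec j i) as [->|]; ring.
Qed.

Lemma norm_ebasis n i : (i < n)%nat -> norm n (ebasis i) = 1.
Proof.
  intros Hi. unfold norm. rewrite inner_ebasis by assumption.
  unfold ebasis. rewrite Nat.eqb_refl. apply sqrt_1.
Qed.

Lemma inner_le_compat_l n g1 g2 d :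
  (forall i, (i < n)%nat -> g1 i <= g2 i) -> (forall i, (i < n)%nat -> 0 <= d i) ->
  inner n g1 d <= inner n g2 d.
Proof. intros H1 H2. apply sumR_le. intros i Hi. apply Rmult_le_compat_r; auto. Qed.

Section DRSubmodular.

Variables (n : nat) (ubar : vec) (f : vec -> R) (grad : vec -> vec).
Hypothesis Hgrad : has_gradient_on_box n ubar f grad.
Hypothesis Hdr : DR_submodular n ubar f.
Hypothesis Hubar : forall i, (i < n)%nat -> 0 < ubar i.

Lemma partial_derivative a i : in_box n ubar a -> (i < n)%nat ->
  forall eps, 0 < eps -> exists delta, 0 < delta /\
    forall c, in_box n ubar (shift a i c) -> Rabs c < delta ->
      Rabs (f (shift a i c) - f a - c * grad a i) <= eps * Rabs c.
Proof.
  intros Ha Hi eps Heps. destruct (Hgrad a Ha) as [_ Hd].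
  destruct (Hd eps Heps) as [delta [Hdelta Happrox]].
  exists delta. split; [assumption|]. intros c Hc Hcd.
  assert (Hdist : dist n (shift a i c) a = Rabs c).
  { unfold dist. rewrite vsub_shift, norm_scal, norm_ebasis by assumption. ring. }
  rewrite <- Hdist in Hcd |- *. specialize (Happrox _ Hc Hcd).
  rewrite vsub_shift, inner_scal_r, inner_ebasis in Happrox by assumption.
  exact Happrox.
Qed.

Lemma partial_difference a i : in_box n ubar a -> (i < n)%nat ->
  forall eps, 0 < eps -> exists delta, 0 < delta /\
    forall s k, 0 <= s <= k -> k < delta ->
      in_box n ubar (shift a i (- s)) -> in_box n ubar (shift a i (- s + k)) ->
      Rabs (f (shift a i (- s + k)) - f (shift a i (- s)) - k * grad a i) <= eps * k.
Proof.
  intros Ha Hi eps Heps. destruct (partial_derivative a i Ha Hi eps Heps) as [delta [Hdelta Hpd]].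
  exists delta. split; [assumption|]. intros s k Hsk Hk Hlo Hhi.
  pose proof (Hpd _ Hlo ltac:(rewrite Rabs_Ropp, Rabs_pos_eq; lra)) as Elo.
  pose proof (Hpd _ Hhi ltac:(rewrite Rabs_pos_eq; lra)) as Ehi.
  rewrite Rabs_Ropp, (Rabs_pos_eq s) in Elo by lra. rewrite (Rabs_pos_eq (- s + k)) in Ehi by lra.
  apply Rabs_le_between in Elo, Ehi. apply Rabs_le_between. lra.
Qed.

(* The i-th coordinates of [a] and [b] are lowered to [Rmin _ (ubar i - k)], so that a step of
   length [k] along [ebasis i] stays in the box while [a <= b] is kept; DR-submodularity then
   compares the two difference quotients, which approximate [grad a i] and [grad b i]. *)
Lemma gradient_antitone a b i :
  in_box n ubar a -> in_box n ubar b -> vle n a b -> (i < n)%nat -> grad b i <= grad a i.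
Proof.
  intros Ha Hb Hab Hi. apply Rnot_lt_le. intros Hlt.
  set (eps := (grad b i - grad a i) / 4). assert (Heps : 0 < eps) by (unfold eps; lra).
  destruct (partial_difference a i Ha Hi eps Heps) as [da [Hda Ea]].
  destruct (partial_difference b i Hb Hi eps Heps) as [db [Hdb Eb]].
  pose proof (Hubar i Hi) as Hui.
  set (k := Rmin (Rmin da db) (ubar i) / 2).
  assert (Hk : 0 < k /\ k < da /\ k < db /\ k < ubar i).
  { unfold k. pose proof (Rmin_l (Rmin da db) (ubar i)). pose proof (Rmin_r (Rmin da db) (ubar i)).
    pose proof (Rmin_l da db). pose proof (Rmin_r da db).
    assert (0 < Rmin (Rmin da db) (ubar i)) by (repeat apply Rmin_glb_lt; assumption). lra. }
  set (sa := a i - Rmin (a i) (ubar i - k)). set (sb := b i - Rmin (b i) (ubar i - k)).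
  destruct Ha as [Va [La Ua]], Hb as [Vb [Lb Ub]].
  pose proof (La i Hi). pose proof (Ua i Hi). pose proof (Lb i Hi). pose proof (Ub i Hi).
  pose proof (Hab i Hi). unfold vzero in *.
  assert (Hsa : 0 <= sa <= k) by (unfold sa, Rmin; destruct Rle_dec; lra).
  assert (Hsb : 0 <= sb <= k) by (unfold sb, Rmin; destruct Rle_dec; lra).
  assert (Hsab : a i - sa <= b i - sb) by (unfold sa, sb, Rmin; repeat destruct Rle_dec; lra).
  assert (Hsa' : 0 <= a i - sa /\ a i - sa + k <= ubar i)
    by (unfold sa, Rmin; destruct Rle_dec; lra).
  assert (Hsb' : 0 <= b i - sb /\ b i - sb + k <= ubar i)
    by (unfold sb, Rmin; destruct Rle_dec; lra).
  assert (Ha : in_box n ubar a) by (split; auto). assert (Hb : in_box n ubar b) by (split; auto).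
  assert (HAlo : in_box n ubar (shift a i (- sa))) by (apply shift_in_box; auto; lra).
  assert (HAhi : in_box n ubar (shift a i (- sa + k))) by (apply shift_in_box; auto; lra).
  assert (HBlo : in_box n ubar (shift b i (- sb))) by (apply shift_in_box; auto; lra).
  assert (HBhi : in_box n ubar (shift b i (- sb + k))) by (apply shift_in_box; auto; lra).
  assert (HAB : vle n (shift a i (- sa)) (shift b i (- sb))) by (apply shift_le; auto; lra).
  pose proof (Hdr _ _ i k HAlo HBlo HAB Hi ltac:(lra)) as Hmono.
  fold (shift (shift a i (- sa)) i k) (shift (shift b i (- sb)) i k) in Hmono.
  rewrite !shift_shift in Hmono. specialize (Hmono HAhi HBhi).
  specialize (Ea sa k Hsa ltac:(lra) HAlo HAhi). specialize (Eb sb k Hsb ltac:(lra) HBlo HBhi).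
  apply Rabs_le_between in Ea, Eb.
  assert (4 * eps * k = k * grad b i - k * grad a i) by (unfold eps; field).
  assert (0 < k * (grad b i - grad a i)) by (apply Rmult_lt_0_compat; lra).
  lra.
Qed.

Lemma increment_bounds p q : in_box n ubar p -> in_box n ubar q -> vle n p q ->
  inner n (grad q) (vsub q p) <= f q - f p <= inner n (grad p) (vsub q p).
Proof.
  intros Hp Hq Hpq.
  destruct (mvt_segment_quadratic n ubar f grad Hgrad p q 0 Hp Hq) as [c [Hc Hmvt]].
  replace (f q - f p) with (inner n (grad (seg p q c)) (vsub q p)) by lra.
  assert (Hz : in_box n ubar (seg p q c)) by (apply seg_in_box; assumption).
  destruct (seg_between n p q c Hpq Hc) as [Hpz Hzq].
  assert (Hd : forall i, (i < n)%nat -> 0 <= vsub q p i)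
    by (intros i Hi; specialize (Hpq i Hi); unfold vsub; lra).
  split; apply inner_le_compat_l; auto; intros i Hi; apply gradient_antitone; auto.
Qed.

Lemma concave_along_nonneg p q lam : in_box n ubar p -> in_box n ubar q -> vle n p q ->
  0 <= lam <= 1 -> f (seg p q lam) >= (1 - lam) * f p + lam * f q.
Proof.
  intros Hp Hq Hpq Hlam.
  set (z := seg p q lam).
  assert (Hz : in_box n ubar z) by (apply seg_in_box; assumption).
  destruct (seg_between n p q lam Hpq Hlam) as [Hpz Hzq].
  destruct (increment_bounds p z Hp Hz Hpz) as [Hlow _].
  destruct (increment_bounds z q Hz Hq Hzq) as [_ Hup].
  set (G := inner n (grad z) (vsub q p)).
  assert (E1 : vsub z p = vscale lam (vsub q p))
    by (apply vec_ext; intros; unfold z, vsub, vscale, seg; ring).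
  assert (E2 : vsub q z = vscale (1 - lam) (vsub q p))
    by (apply vec_ext; intros; unfold z, vsub, vscale, seg; ring).
  rewrite E1, inner_scal_r in Hlow. rewrite E2, inner_scal_r in Hup. fold G in Hlow, Hup.
  assert (lam * (f q - f z) <= lam * ((1 - lam) * G)) by (apply Rmult_le_compat_l; lra).
  assert ((1 - lam) * (lam * G) <= (1 - lam) * (f z - f p)) by (apply Rmult_le_compat_l; lra).
  nra.
Qed.

Definition vjoin (x y : vec) : vec := fun i => Rmax (x i) (y i).

(* For [rho < 1], [vjoin x xs] lies on the segment from [xs] to a point [q] of the box
   above [xs], at parameter [1 - rho]; concavity and [f q >= 0] conclude. *)
Lemma join_lower_bound (Hnonneg : nonneg_on_box n ubar f) x xs rho :
  in_box n ubar x -> in_box n ubar xs -> 0 <= rho <= 1 ->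
  (forall i, (i < n)%nat -> x i <= (1 - rho) * ubar i) ->
  f (vjoin x xs) >= rho * f xs.
Proof.
  intros Hx Hxs Hrho Hxub.
  destruct Hx as [Vx [Lx Ux]], Hxs as [Vs [Ls Us]].
  unfold vle, vzero, is_vec in *.
  destruct (Req_dec rho 1) as [->|Hrho1].
  - replace (vjoin x xs) with xs; [lra|].
    apply vec_ext; intro i. unfold vjoin. destruct (Nat.lt_ge_cases i n) as [Hi|Hi].
    + specialize (Hxub i Hi). specialize (Lx i Hi). specialize (Ls i Hi).
      rewrite Rmax_right; lra.
    + rewrite Vx, Vs, Rmax_left by (auto || lra). reflexivity.
  - set (th := 1 - rho). assert (Hth : 0 < th <= 1) by (unfold th; lra).
    set (q := fun i => xs i + (Rmax (x i) (xs i) - xs i) / th).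
    assert (Hstep : forall i, 0 <= (Rmax (x i) (xs i) - xs i) / th).
    { intros i. apply Rdiv_le_0_compat; [pose proof (Rmax_r (x i) (xs i))|]; lra. }
    assert (Hq : in_box n ubar q).
    { split; [|split]; unfold vle, vzero, is_vec, q.
      - intros i Hi. rewrite Vx, Vs, Rmax_left by (auto || lra). field. lra.
      - intros i Hi. specialize (Ls i Hi). specialize (Hstep i). lra.
      - intros i Hi. specialize (Ls i Hi). specialize (Us i Hi).
        specialize (Hxub i Hi). fold th in Hxub.
        unfold Rmax; destruct Rle_dec.
        + replace ((xs i - xs i) / th) with 0 by (field; lra). lra.
        + assert ((x i - xs i) / th <= ubar i - xs i).
          { apply Rmult_le_reg_r with th; [lra|].
            unfold Rdiv. rewrite Rmult_assoc, Rinv_l by lra. nra. }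
          lra. }
    assert (Hle : vle n xs q) by (intros i Hi; unfold q; specialize (Hstep i); lra).
    pose proof (concave_along_nonneg xs q th (conj Vs (conj Ls Us)) Hq Hle ltac:(lra)) as Hconc.
    replace (seg xs q th) with (vjoin x xs) in Hconc.
    + pose proof (Hnonneg q Hq). unfold th in *. nra.
    + apply vec_ext; intro i; unfold seg, q, vjoin. field. lra.
Qed.

End DRSubmodular.

Lemma exp_pow a m : exp a ^ m = exp (INR m * a).
Proof.
  induction m as [|m IH].
  - simpl. rewrite Rmult_0_l, exp_0. reflexivity.
  - rewrite S_INR, <- tech_pow_Rmult, IH, <- exp_plus. f_equal. ring.
Qed.

(* With [m = K - 1]: [exp (-1/m) <= m/(m+1)] because [exp (1/m) >= 1 + 1/m]. *)
Lemma exp_neg1_le_pow K : (0 < K)%nat -> exp (-1) <= (1 - 1 / INR K) ^ (K - 1).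
Proof.
  intros HK. destruct K as [|[|m]]; [lia| |].
  - simpl. rewrite <- exp_0. left. apply exp_increasing. lra.
  - replace (S (S m) - 1)%nat with (S m) by lia.
    rewrite (S_INR (S m)). set (r := INR (S m)).
    assert (Hr : 1 <= r) by (apply (le_INR 1); lia).
    replace (exp (-1)) with (exp (- / r) ^ S m) by (rewrite exp_pow; f_equal; fold r; field; lra).
    apply pow_incr. split; [left; apply exp_pos|].
    pose proof (exp_ineq1_le (/ r)). rewrite exp_Ropp.
    assert (Hinv : 0 < / r) by (apply Rinv_0_lt_compat; lra).
    apply Rmult_le_reg_r with (exp (/ r)); [apply exp_pos|].
    rewrite Rinv_l by (apply Rgt_not_eq, exp_pos).
    assert (E : 1 - 1 / (r + 1) = r / (r + 1)) by (field; lra).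
    assert (E' : r / (r + 1) * (1 + / r) = 1) by (field; lra).
    assert (0 <= r / (r + 1)) by (apply Rdiv_le_0_compat; lra).
    rewrite E. nra.
Qed.

Lemma step_in_box n ubar X V gamma rho :
  in_box n ubar X -> in_box n ubar V -> vle n V (vsub ubar X) -> 0 <= gamma <= 1 ->
  (forall i, (i < n)%nat -> X i <= (1 - rho) * ubar i) ->
  in_box n ubar (vadd X (vscale gamma V)) /\
  forall i, (i < n)%nat -> vadd X (vscale gamma V) i <= (1 - (1 - gamma) * rho) * ubar i.
Proof.
  intros [VX [LX UX]] [VV [LV UV]] HVX Hgamma HXrho.
  unfold in_box, is_vec, vle, vsub, vzero, vadd, vscale in *.
  assert (Hup : forall i, (i < n)%nat -> X i + gamma * V i <= (1 - gamma) * X i + gamma * ubar i).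
  { intros i Hi. specialize (HVX i Hi). nra. }
  split; [split; [|split]|]; intros i Hi.
  - rewrite VX, VV by assumption. ring.
  - specialize (LX i Hi). specialize (LV i Hi). nra.
  - specialize (Hup i Hi). specialize (UX i Hi). nra.
  - specialize (Hup i Hi). specialize (HXrho i Hi). nra.
Qed.

Lemma FW_run_uniform_steps n ubar P grad K x v t :
  (0 < K)%nat -> FW_run n ubar P grad (1 / INR K) x v t ->
  forall k, (k < K)%nat -> t k < 1 /\ x (S k) = vadd (x k) (vscale (1 / INR K) (v k)).
Proof.
  intros HK HFW. set (g := 1 / INR K) in HFW |- *. destruct HFW as [_ [Ht0 Hstep]].
  assert (HKg : INR K * g = 1) by (unfold g; field; apply not_0_INR; lia).
  assert (Hroom : forall k, (k < K)%nat -> INR k * g + g <= 1 /\ 0 < g).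
  { intros k Hk. assert (HkK : INR (S k) <= INR K) by (apply le_INR; lia).
    assert (0 < g) by (unfold g; apply Rdiv_lt_0_compat; [lra|apply lt_0_INR; lia]).
    rewrite S_INR in HkK. split; nra. }
  assert (Htk : forall k, (k < K)%nat -> t k = INR k * g).
  { induction k as [|k IH]; intros Hk; [rewrite Ht0; simpl; ring|].
    destruct (Hroom k ltac:(lia)) as [Hk1 Hg].
    destruct (Hstep k ltac:(rewrite IH by lia; lra)) as [_ [_ ->]].
    rewrite IH, Rmin_left, S_INR by (lia || lra). ring. }
  intros k Hk. destruct (Hroom k Hk) as [Hk1 Hg].
  assert (Ht : t k < 1) by (rewrite Htk by assumption; lra).
  destruct (Hstep k Ht) as [_ [-> _]]. rewrite Rmin_left by (rewrite Htk by assumption; lra).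
  split; [assumption|reflexivity].
Qed.

Section FrankWolfe.

Variables (n : nat) (ubar : vec) (f : vec -> R) (grad : vec -> vec) (L : R)
  (P : vec -> Prop) (D : R) (xstar : vec).
Hypothesis Hubar : forall i, (i < n)%nat -> 0 < ubar i.
Hypothesis Hgrad : has_gradient_on_box n ubar f grad.
Hypothesis Hnonneg : nonneg_on_box n ubar f.
Hypothesis Hdr : DR_submodular n ubar f.
Hypothesis Hlip : lipschitz_gradient n ubar grad L.
Hypothesis Hadm : admissible_set n ubar P.
Hypothesis Hdiam : is_diameter n P D.
Hypothesis Hmax : is_maximizer P f xstar.

Lemma zero_in_box : in_box n ubar vzero.
Proof.
  split; [|split]; intros i Hi; unfold vzero; [reflexivity|lra|].
  specialize (Hubar i Hi). lra.
Qed.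

Lemma admissible_zero : P vzero.
Proof.
  destruct Hadm as [Hbox [[p Hp] [_ [_ Hdown]]]].
  apply (Hdown p); [assumption| |intros i Hi; unfold vzero; lra|].
  - intros i Hi. reflexivity.
  - apply (Hbox p Hp).
Qed.

Lemma maximizer_value_nonneg : 0 <= f xstar.
Proof. apply Hnonneg. destruct Hadm as [HPbox _]. apply HPbox, Hmax. Qed.

Lemma admissible_norm_sq_le V : P V -> inner n V V <= D ^ 2.
Proof.
  intros HV. destruct Hdiam as [_ Hdm]. specialize (Hdm V vzero HV admissible_zero).
  unfold dist in Hdm. rewrite (norm_ext n _ V) in Hdm by (intros; unfold vsub, vzero; ring).
  rewrite <- norm_sq. pose proof (norm_ge0 n V). simpl. nra.
Qed.

Lemma frank_wolfe_step_value X V gamma rho :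
  in_box n ubar X -> 0 <= rho <= 1 -> (forall i, (i < n)%nat -> X i <= (1 - rho) * ubar i) ->
  P V -> vle n V (vsub ubar X) ->
  (forall w, P w -> vle n w (vsub ubar X) -> inner n w (grad X) <= inner n V (grad X)) ->
  0 <= gamma <= 1 ->
  f (vadd X (vscale gamma V))
  >= (1 - gamma) * f X + gamma * rho * f xstar - L * gamma ^ 2 * D ^ 2 / 2.
Proof.
  intros HX Hrho HXrho HV HVX HVmax Hgamma.
  destruct Hadm as [HPbox [_ [_ [_ Hdown]]]]. destruct Hmax as [Hxs _].
  pose proof (HPbox _ Hxs) as Hxsbox. pose proof (HPbox _ HV) as HVbox.
  set (X' := vadd X (vscale gamma V)).
  assert (HX' : in_box n ubar X') by (apply (step_in_box n ubar X V gamma rho); auto).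
  pose proof (descent_lemma n ubar f grad Hgrad L X X' Hlip HX HX') as Hdesc.
  assert (EX' : vsub X' X = vscale gamma V) by (apply vec_ext; intros; unfold X', vsub, vadd; ring).
  rewrite EX', !inner_scal_r, inner_scal_l in Hdesc.
  pose proof (admissible_norm_sq_le V HV) as HVD.
  set (J := vjoin X xstar).
  destruct HX as [VX [LX UX]], Hxsbox as [Vs [Ls Us]].
  assert (HJ : in_box n ubar J).
  { split; [|split]; unfold J, vjoin; intros i Hi.
    - rewrite VX, Vs by assumption. apply Rmax_left; lra.
    - specialize (LX i Hi). pose proof (Rmax_l (X i) (xstar i)). unfold vzero in *. lra.
    - apply Rmax_lub; auto. }
  assert (HXJ : vle n X J) by (intros i Hi; apply Rmax_l).
  assert (HW : P (vsub J X)).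
  { apply (Hdown xstar); [assumption| | |]; unfold J, is_vec, vle, vzero, vsub, vjoin; intros i Hi.
    - rewrite VX, Vs by assumption. rewrite Rmax_left; lra.
    - pose proof (Rmax_l (X i) (xstar i)). lra.
    - specialize (LX i Hi). specialize (Ls i Hi). unfold vzero in *.
      unfold Rmax; destruct Rle_dec; lra. }
  assert (HWmax : inner n (vsub J X) (grad X) <= inner n V (grad X)).
  { apply HVmax; [assumption|]. intros i Hi. unfold J, vsub, vjoin.
    assert (Rmax (X i) (xstar i) <= ubar i) by (apply Rmax_lub; auto). lra. }
  destruct (increment_bounds n ubar f grad Hgrad Hdr Hubar X J (conj VX (conj LX UX)) HJ HXJ)
    as [_ Hgain].
  pose proof (join_lower_bound n ubar f grad Hgrad Hdr Hubar Hnonneg X xstar rho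
                (conj VX (conj LX UX)) (conj Vs (conj Ls Us)) Hrho HXrho) as Hjoin.
  fold J in Hjoin. rewrite inner_comm in Hgain.
  assert (Hlin : gamma * (rho * f xstar - f X) <= gamma * inner n (grad X) V).
  { rewrite (inner_comm n (grad X) V). apply Rmult_le_compat_l; lra. }
  assert (Hquad : L / 2 * (gamma * (gamma * inner n V V)) <= L * gamma ^ 2 * D ^ 2 / 2).
  { destruct Hlip as [HL _].
    replace (L * gamma ^ 2 * D ^ 2 / 2) with (L / 2 * (gamma * (gamma * D ^ 2))) by field.
    apply Rmult_le_compat_l; [lra|]. apply Rmult_le_compat_l; [lra|].
    apply Rmult_le_compat_l; lra. }
  lra.
Qed.

(* At [k = 0] the truncated exponent [k - 1] is harmless since the factor [INR k] vanishes. *)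
Lemma frank_wolfe_invariant K x v t :
  (0 < K)%nat -> FW_run n ubar P grad (1 / INR K) x v t ->
  forall k, (k <= K)%nat ->
  in_box n ubar (x k) /\
  (forall i, (i < n)%nat -> x k i <= (1 - (1 - 1 / INR K) ^ k) * ubar i) /\
  f (x k) >= INR k * (1 / INR K) * (1 - 1 / INR K) ^ (k - 1) * f xstar
             - INR k * (L * (1 / INR K) ^ 2 * D ^ 2 / 2).
Proof.
  intros HK HFW. pose proof (FW_run_uniform_steps n ubar P grad K x v t HK HFW) as Hsteps.
  destruct HFW as [Hx0 [_ Hstep]]. set (g := 1 / INR K) in *.
  assert (Hg : 0 < g <= 1).
  { assert (1 <= INR K) by (apply (le_INR 1); lia).
    unfold g. split; [apply Rdiv_lt_0_compat; lra|].
    apply Rmult_le_reg_r with (INR K); [lra|]. field_simplify; lra. }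
  set (A := L * g ^ 2 * D ^ 2 / 2).
  assert (HA : 0 <= A).
  { destruct Hlip as [HL _]. unfold A. pose proof (pow2_ge_0 g). pose proof (pow2_ge_0 D).
    apply Rmult_le_pos; [|lra]. apply Rmult_le_pos; [apply Rmult_le_pos|]; assumption. }
  pose proof maximizer_value_nonneg as Hfs.
  induction k as [|k IH]; intros Hk.
  - rewrite Hx0. split; [apply zero_in_box|split].
    + intros i Hi. specialize (Hubar i Hi). unfold vzero. simpl. lra.
    + pose proof (Hnonneg vzero zero_in_box). simpl INR. lra.
  - destruct (IH ltac:(lia)) as [HX [HXub Hf]]. destruct (Hsteps k ltac:(lia)) as [Htk ->].
    destruct (Hstep k Htk) as [[HV [HVX HVmax]] _].
    set (rho := (1 - g) ^ k) in *.
    assert (Hrho : 0 <= rho <= 1).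
    { pose proof (pow_incr (1 - g) 1 k ltac:(lra)) as Hle1. rewrite pow1 in Hle1.
      split; [apply pow_le; lra|exact Hle1]. }
    assert (HVbox : in_box n ubar (v k)) by (destruct Hadm as [HPbox _]; apply HPbox, HV).
    destruct (step_in_box n ubar (x k) (v k) g rho HX HVbox HVX ltac:(lra) HXub) as [Hbox Hub].
    split; [assumption|split].
    + intros i Hi. simpl. fold rho. apply Hub, Hi.
    + pose proof (frank_wolfe_step_value (x k) (v k) g rho HX Hrho HXub HV HVX HVmax ltac:(lra))
        as Hval. fold A in Hval.
      assert (Hprev : INR k * (1 - g) ^ (k - 1) * (1 - g) = INR k * rho).
      { unfold rho. destruct k; [simpl; ring|]. replace (S k - 1)%nat with k by lia. simpl. ring. }
      assert (Hdecay : (1 - g) * (INR k * g * (1 - g) ^ (k - 1) * f xstar - INR k * A)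
                       <= (1 - g) * f (x k)) by (apply Rmult_le_compat_l; lra).
      assert (0 <= g * (INR k * A))
        by (apply Rmult_le_pos; [lra|apply Rmult_le_pos; [apply pos_INR|assumption]]).
      replace (S k - 1)%nat with k by lia. fold rho. rewrite S_INR.
      replace ((1 - g) * (INR k * g * (1 - g) ^ (k - 1) * f xstar - INR k * A))
        with (g * (INR k * rho) * f xstar - (1 - g) * (INR k * A)) in Hdecay
        by (rewrite <- Hprev; ring).
      nra.
Qed.

Lemma frank_wolfe_bound K x v t :
  (0 < K)%nat -> FW_run n ubar P grad (1 / INR K) x v t ->
  f (x K) >= (1 - 1 / INR K) ^ (K - 1) * f xstar - L * D ^ 2 / (2 * INR K).
Proof.
  intros HK HFW. destruct (frank_wolfe_invariant K x v t HK HFW K (le_n K)) as [_ [_ Hf]].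
  assert (HKpos : 0 < INR K) by (apply lt_0_INR; assumption).
  replace (INR K * (1 / INR K)) with 1 in Hf by (field; lra).
  replace (INR K * (L * (1 / INR K) ^ 2 * D ^ 2 / 2)) with (L * D ^ 2 / (2 * INR K)) in Hf
    by (field; lra).
  lra.
Qed.

End FrankWolfe.

Theorem corollary1 :
  exists C : R, 0 <= C /\
  forall (n : nat) (ubar : vec) (f : vec -> R) (grad : vec -> vec) (L : R)
         (P : vec -> Prop) (D : R) (xstar : vec) (K : nat)
         (x v : nat -> vec) (t : nat -> R),
    is_vec n ubar -> (forall i, (i < n)%nat -> 0 < ubar i) ->
    has_gradient_on_box n ubar f grad ->
    nonneg_on_box n ubar f ->
    DR_submodular n ubar f ->
    lipschitz_gradient n ubar grad L ->
    admissible_set n ubar P ->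
    is_diameter n P D ->
    is_maximizer P f xstar ->
    (0 < K)%nat ->
    FW_run n ubar P grad (1 / INR K) x v t ->
    f (x K) >= exp (-1) * f xstar - L * D ^ 2 / (2 * INR K)
               - C / (INR K ^ 2) * f xstar.
Proof.
  exists 0. split; [lra|].
  intros n ubar f grad L P D xstar K x v t _ Hubar Hgrad Hnonneg Hdr Hlip Hadm Hdiam Hmax HK HFW.
  pose proof (frank_wolfe_bound n ubar f grad L P D xstar Hubar Hgrad Hnonneg Hdr Hlip Hadm
                Hdiam Hmax K x v t HK HFW) as Hbound.
  pose proof (maximizer_value_nonneg n ubar f P xstar Hnonneg Hadm Hmax) as Hfs.
  pose proof (Rmult_le_compat_r _ _ _ Hfs (exp_neg1_le_pow K HK)) as Hexp.
  unfold Rdiv at 2. rewrite !Rmult_0_l. lra.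
Qed.
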